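(* Let $P$ be a poset, $f$ a downward closure operator on $P$, and $x,y\in P$ with $x<y$. Assume $f^{-1}(x)=\{x\}$. Then \[ |(x,y)_P|\simeq\begin{cases}|(x,y)_{\operatorname{Fix} f}| & \text{if } y\in\operatorname{Fix} f,\\ \mathrm{pt} & \text{otherwise.}\end{cases}\]
   Context: A downward closure operator on a poset $P$ is an order-preserving map $f:P\to P$ with $f(z)\le z$ for all $z\in P$ and $f\circ f=f$. $\operatorname{Fix} f=\{z\in P: f(z)=z\}$, regarded as a poset with the restricted order. For a poset $Q$, $|Q|$ is the geometric realization of its order complex (simplices are finite nonempty chains), and $(x,y)_Q=\{z\in Q:x<z<y\}$. $\simeq$ denotes homotopy equivalence and $\mathrm{pt}$ the one-point space. *)

From HB Require Import structures.
From mathcomp Require Import all_boot all_order all_algebra.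
From mathcomp Require Import all_classical all_reals topology normedtype.
Set Implicit Arguments. Unset Strict Implicit. Unset Printing Implicit Defensive.
Import Order.TTheory GRing.Theory Num.Theory.
Import numFieldNormedType.Exports.
Local Open Scope classical_set_scope.
Local Open Scope ring_scope.

Definition downward_closure {d} {P : porderType d} (f : P -> P) : Prop :=
  [/\ {homo f : a b / (a <= b)%O},
      (forall z : P, (f z <= z)%O) &
      (forall z : P, f (f z) = f z)].

(* Fix f, as a subset of P (its order is the restricted order of P). *)
Definition Fix {d} {P : porderType d} (f : P -> P) : set P := [set z | f z = z].

Definition open_interval {d} {P : porderType d} (Q : set P) (x y : P) : set P :=
  [set z | Q z /\ (x < z)%O /\ (z < y)%O].

Definition is_chain {d} {P : porderType d} (s : seq P) : Prop :=
  forall a b, a \in s -> b \in s -> (a <= b)%O \/ (b <= a)%O.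

(* Geometric realization of the order complex of a subposet S of P.        *)
Section Realization.
Variables (R : realType) (d : Order.disp_t) (P : porderType d) (S : set P).

Definition supported_on (s : seq P) (alpha : P -> R) : Prop :=
  forall p, p \notin s -> alpha p = 0.

Definition in_realization (alpha : P -> R) : Prop :=
  (forall p, 0 <= alpha p) /\
  exists s : seq P, [/\ uniq s, (forall p, p \in s -> S p), is_chain s,
                        supported_on s alpha & \sum_(p <- s) alpha p = 1].

Definition realization := {alpha : P -> R | in_realization alpha}.

HB.instance Definition _ := gen_eqMixin realization.
HB.instance Definition _ := gen_choiceMixin realization.

(* Weak (coherent) topology: U is open iff its trace on every closed simplex
   (spanned by a finite chain c of S) is open for the Euclidean topology of
   that simplex. *)
Definition weak_open (U : set realization) : Prop :=
  forall (c : seq P), uniq c -> (forall p, p \in c -> S p) -> is_chain c ->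
  forall a : realization, U a -> supported_on c (sval a) ->
  exists2 e : R, 0 < e &
    forall b : realization, supported_on c (sval b) ->
      (forall p, p \in c -> `|sval b p - sval a p| < e) -> U b.

Lemma weak_openT : weak_open setT.
Proof. by move=> c _ _ _ a _ _; exists 1 => //. Qed.

Lemma weak_openI : setI_closed weak_open.
Proof.
move=> U V oU oV c uc cS cc a [Ua Va] sa.
have [e1 e1p H1] := oU c uc cS cc a Ua sa.
have [e2 e2p H2] := oV c uc cS cc a Va sa.
exists (Num.min e1 e2); first by rewrite lt_min e1p e2p.
move=> b sb hb; split.
- by apply: H1 => // p pc; have := hb p pc; rewrite lt_min => /andP[].
- by apply: H2 => // p pc; have := hb p pc; rewrite lt_min => /andP[].
Qed.

Lemma weak_open_bigU (I : Type) (F : I -> set realization) :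
  (forall i, weak_open (F i)) -> weak_open (\bigcup_i F i).
Proof.
move=> oF c uc cS cc a [i _ Fia] sa.
have [e ep H] := oF i c uc cS cc a Fia sa.
by exists e => // b sb hb; exists i => //; apply: H.
Qed.

HB.instance Definition _ :=
  isOpenTopological.Build realization weak_openT weak_openI weak_open_bigU.

End Realization.

(* A homotopy is a map X x R -> Y continuous on X x [0,1] (product          *)
(* topology, restricted to the subspace X x [0,1]).                          *)
Definition homotopic (R : realType) (X Y : topologicalType) (g h : X -> Y) : Prop :=
  exists H : X * R -> Y,
    [/\ {within [set xt : X * R | 0 <= xt.2 <= 1], continuous H},
        (forall x, H (x, 0) = g x) &
        (forall x, H (x, 1) = h x)].

Definition homotopy_equivalent (R : realType) (X Y : topologicalType) : Prop :=
  exists (g : X -> Y) (h : Y -> X),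
    [/\ continuous g, continuous h,
        homotopic R (h \o g) idfun & homotopic R (g \o h) idfun].

Definition pt : Type := unit.
HB.instance Definition _ := gen_eqMixin pt.
HB.instance Definition _ := gen_choiceMixin pt.
Lemma pt_openT : (@setT (set pt)) setT. Proof. by []. Qed.
Lemma pt_openI : setI_closed (@setT (set pt)). Proof. by []. Qed.
Lemma pt_open_bigU (I : Type) (F : I -> set pt) :
  (forall i, setT (F i)) -> setT (\bigcup_i F i).
Proof. by []. Qed.
HB.instance Definition _ := isOpenTopological.Build pt pt_openT pt_openI pt_open_bigU.

From HB Require Import structures.
From mathcomp Require Import all_boot all_order all_algebra.
From mathcomp Require Import all_classical all_reals topology normedtype.
From mathcomp Require Import ring lra.
Import numFieldNormedType.Exports.
Set Implicit Arguments. Unset Strict Implicit. Unset Printing Implicit Defensive.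
Import Order.TTheory GRing.Theory Num.Theory.
Local Open Scope classical_set_scope.
Local Open Scope ring_scope.

(* A point of the order complex of S is a probability vector supported on a
   finite chain of S.  Listing the chain increasingly and laying the weights end
   to end in [0, 1], each vertex p gets a segment.  Given maps g0, g1, g2 that
   are monotone on S with g0 <= g1 and g0 <= g2, and parameters a <= b, send the
   part of the segment of p lying in [0, a], [a, b], [b, 1] to g0 p, g1 p, g2 p.
   The resulting weights still live on a chain and depend continuously on the
   point and on (a, b); moving (a, b) from (0, 0) through (1, 1) to (0, 1) is a
   homotopy between the maps induced by g2 and by g1.
   Since f^-1(x) = {x} and f <= id, f maps (x, y)_P into (x, y)_{Fix f}, and the
   zigzag id >= f <= f shows that f and the inclusion are inverse homotopy
   equivalences (whether or not y is fixed).  If f y <> y, then c = f y lies in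
   (x, y)_P and f z <= c there, so the zigzag id >= f <= c contracts
   |(x, y)_P| to the vertex c. *)

Ltac minmax_lra :=
  repeat match goal with
  | |- context[Order.max ?x ?y] => case: (leP x y)
  | |- context[Order.min ?x ?y] => case: (leP x y)
  | |- context[`|?z|] => case: (ler0P z)
  end; intros; lra.

Section Overlap.
Variable R : realType.
Implicit Types L U lo hi t : R.

Definition clamp L U t : R := Num.min U (Num.max L t).

(* For [L <= U] and [lo <= hi], the length of [L, U] \cap [lo, hi]. *)
Definition overlap L U lo hi : R := clamp L U hi - clamp L U lo.

Lemma clamp_homo L U : {homo clamp L U : s t / s <= t}.
Proof. move=> s t; rewrite /clamp; minmax_lra. Qed.

Lemma clamp_lipschitz L U t L' U' t' :
  `|clamp L U t - clamp L' U' t'| <= `|L - L'| + `|U - U'| + `|t - t'|.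
Proof.
have max_lip (a b a' b' : R) : `|Num.max a b - Num.max a' b'| <= `|a - a'| + `|b - b'|.
  by minmax_lra.
have min_lip (a b a' b' : R) : `|Num.min a b - Num.min a' b'| <= `|a - a'| + `|b - b'|.
  by minmax_lra.
apply: le_trans (min_lip _ _ _ _) _; have := max_lip L t L' t'; lra.
Qed.

Lemma clamp01_bounds t : 0 <= clamp 0 1 t <= 1.
Proof. by rewrite /clamp; apply/andP; split; minmax_lra. Qed.

Lemma clamp01_lipschitz t t' : `|clamp 0 1 t - clamp 0 1 t'| <= `|t - t'|.
Proof. by apply: le_trans (clamp_lipschitz _ _ _ _ _ _) _; rewrite !subrr normr0 !add0r. Qed.

Lemma overlap_ge0 L U lo hi : lo <= hi -> 0 <= overlap L U lo hi.
Proof. by move=> lohi; rewrite /overlap subr_ge0 clamp_homo. Qed.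

Lemma overlapxx L U lo : overlap L U lo lo = 0.
Proof. by rewrite /overlap subrr. Qed.

Lemma overlap_eqLU L lo hi : overlap L L lo hi = 0.
Proof.
have clampLL t : clamp L L t = L by rewrite /clamp; minmax_lra.
by rewrite /overlap !clampLL subrr.
Qed.

Lemma overlap01 L U : 0 <= L -> L <= U -> U <= 1 -> overlap L U 0 1 = U - L.
Proof. by rewrite /overlap /clamp => *; minmax_lra. Qed.

Lemma overlap_split L U a b : 0 <= L -> L <= U -> U <= 1 ->
  overlap L U 0 a + overlap L U a b + overlap L U b 1 = U - L.
Proof. by move=> *; rewrite -(overlap01 (U:=U)) // /overlap; ring. Qed.

Lemma overlap_lipschitz L U lo hi L' U' lo' hi' :
  `|overlap L U lo hi - overlap L' U' lo' hi'| <=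
     (`|L - L'| + `|U - U'|) *+ 2 + `|lo - lo'| + `|hi - hi'|.
Proof.
rewrite /overlap.
have -> : clamp L U hi - clamp L U lo - (clamp L' U' hi' - clamp L' U' lo') =
  (clamp L U hi - clamp L' U' hi') - (clamp L U lo - clamp L' U' lo') by ring.
apply: le_trans (ler_normB _ _) _.
have := clamp_lipschitz L U hi L' U' hi'; have := clamp_lipschitz L U lo L' U' lo'.
rewrite mulr2n; lra.
Qed.

Lemma overlap_gt0 L U lo hi : L <= U -> 0 < overlap L U lo hi ->
  [/\ lo < U, L < hi & lo < hi].
Proof. rewrite /overlap /clamp => LU pos; split; move: pos; minmax_lra. Qed.

End Overlap.

Section ZigzagPath.
Variable R : realType.
Implicit Types t : R.

(* As t runs through [0, 1], (path_lo t, path_hi t) runs from (0, 0) through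
   (1, 1) to (0, 1); a middle band [lo, hi] thus only occurs with hi = 1. *)
Definition path_lo t : R := Num.min (2 * clamp 0 1 t) (2 - 2 * clamp 0 1 t).
Definition path_hi t : R := Num.min 1 (2 * clamp 0 1 t).

Lemma path_bounds t : [/\ 0 <= path_lo t, path_lo t <= path_hi t & path_hi t <= 1].
Proof.
have /andP[u0 u1] := clamp01_bounds t.
by rewrite /path_lo /path_hi; split; minmax_lra.
Qed.

Lemma path_mid t : path_lo t < path_hi t -> path_hi t = 1.
Proof.
have /andP[u0 u1] := clamp01_bounds t.
by rewrite /path_lo /path_hi; minmax_lra.
Qed.

Lemma path_lo_lipschitz t t' : `|path_lo t - path_lo t'| <= `|t - t'| *+ 2.
Proof.
have := clamp01_lipschitz t t'; have /andP[u0 u1] := clamp01_bounds t.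
have /andP[v0 v1] := clamp01_bounds t'.
by rewrite /path_lo mulr2n; minmax_lra.
Qed.

Lemma path_hi_lipschitz t t' : `|path_hi t - path_hi t'| <= `|t - t'| *+ 2.
Proof.
have := clamp01_lipschitz t t'; have /andP[u0 u1] := clamp01_bounds t.
have /andP[v0 v1] := clamp01_bounds t'.
by rewrite /path_hi mulr2n; minmax_lra.
Qed.

Lemma path0 : path_lo 0 = 0 /\ path_hi 0 = 0.
Proof. by rewrite /path_lo /path_hi /clamp; split; minmax_lra. Qed.

Lemma path1 : path_lo 1 = 0 /\ path_hi 1 = 1.
Proof. by rewrite /path_lo /path_hi /clamp; split; minmax_lra. Qed.

End ZigzagPath.

Section Band.
Variables (R : realType) (d : Order.disp_t) (P : porderType d).
Implicit Types (al : P -> R) (s : seq P).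

Definition weight_lt al s p := \sum_(q <- s | (q < p)%O) al q.
Definition weight_le al s p := \sum_(q <- s | (q <= p)%O) al q.

(* The segment of vertex [p] is [[weight_lt al s p, weight_le al s p]]. *)
Definition band_term al s g0 g1 g2 (a b : R) (z p : P) : R :=
  overlap (weight_lt al s p) (weight_le al s p) 0 a * (g0 p == z)%:R
  + overlap (weight_lt al s p) (weight_le al s p) a b * (g1 p == z)%:R
  + overlap (weight_lt al s p) (weight_le al s p) b 1 * (g2 p == z)%:R.

Definition band al s g0 g1 g2 a b (z : P) : R :=
  \sum_(p <- s) band_term al s g0 g1 g2 a b z p.

Lemma ler_sum_subpred al s (C C' : pred P) : (forall q, 0 <= al q) ->
  (forall q, C q -> C' q) -> \sum_(q <- s | C q) al q <= \sum_(q <- s | C' q) al q.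
Proof.
move=> al0 CC'; rewrite big_mkcond [X in _ <= X]big_mkcond; apply: ler_sum => q _.
by case: (boolP (C q)) => [/CC' ->|_] //; case: (C' q).
Qed.

Lemma weight_le_lt al s p : p \in s -> uniq s -> weight_le al s p = weight_lt al s p + al p.
Proof.
move=> ps us; rewrite /weight_le /weight_lt big_mkcond (bigD1_seq p) //= lexx.
rewrite [X in _ = X + _]big_mkcond (bigD1_seq p) //= ltxx add0r addrC; congr (_ + _).
rewrite [RHS]big_mkcond [LHS]big_mkcond; apply: eq_bigr => q _.
by rewrite lt_neqAle; case: (q != p).
Qed.

Lemma sum_indicator (x : P) s (c : R) : uniq s ->
  \sum_(z <- s) c * (x == z)%:R = if x \in s then c else 0.
Proof.
elim: s => [|y s IH] /=; first by rewrite big_nil.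
move=> /andP[ys us]; rewrite big_cons IH // in_cons.
case: (x =P y) => [->|_] /=; last by rewrite mulr0 add0r.
by rewrite (negbTE ys) mulr1 addr0.
Qed.

Lemma sum_weight_indicator al s z : uniq s -> supported_on s al ->
  \sum_(p <- s) al p * (p == z)%:R = al z.
Proof.
move=> us sa; rewrite (eq_bigr (fun p => al z * (z == p)%:R)); last first.
  by move=> p _; rewrite eq_sym; case: eqP => [->|_]; rewrite ?mulr0.
rewrite sum_indicator //; case: ifP => // /negbT zs; by rewrite sa.
Qed.

Definition nonzero al := [pred q | al q != 0].

Lemma weight_lt_filter al s p : weight_lt al s p = weight_lt al (seq.filter (nonzero al) s) p.
Proof.
rewrite /weight_lt big_filter_cond [RHS]big_mkcond [LHS]big_mkcond.
by apply: eq_bigr => q _ /=; case: (al q =P 0) => [->|_]; case: (q < p)%O.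
Qed.

Lemma weight_le_filter al s p : weight_le al s p = weight_le al (seq.filter (nonzero al) s) p.
Proof.
rewrite /weight_le big_filter_cond [RHS]big_mkcond [LHS]big_mkcond.
by apply: eq_bigr => q _ /=; case: (al q =P 0) => [->|_]; case: (q <= p)%O.
Qed.

Lemma band_filter al s g0 g1 g2 a b z : uniq s ->
  band al s g0 g1 g2 a b z = band al (seq.filter (nonzero al) s) g0 g1 g2 a b z.
Proof.
move=> us; rewrite /band.
have -> : \sum_(p <- s) band_term al s g0 g1 g2 a b z p =
          \sum_(p <- s | nonzero al p) band_term al s g0 g1 g2 a b z p.
  rewrite [RHS]big_mkcond; apply: eq_big_seq => p ps /=.
  case: (al p =P 0) => //= alp0.
  by rewrite /band_term weight_le_lt // alp0 addr0 !overlap_eqLU !mul0r !addr0.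
rewrite -big_filter; apply: eq_bigr => p _.
by rewrite /band_term -weight_lt_filter -weight_le_filter.
Qed.

Lemma band_chain_indep al s1 s2 g0 g1 g2 a b z : uniq s1 -> uniq s2 ->
  supported_on s1 al -> supported_on s2 al ->
  band al s1 g0 g1 g2 a b z = band al s2 g0 g1 g2 a b z.
Proof.
move=> u1 u2 sa1 sa2; rewrite band_filter // [RHS]band_filter //.
have pe : perm_eq (seq.filter (nonzero al) s1) (seq.filter (nonzero al) s2).
  apply: uniq_perm; rewrite ?filter_uniq // => q; rewrite !mem_filter /=.
  case: (al q =P 0) => //= alq.
  case: (boolP (q \in s1)) => [_|/sa1 //]; case: (boolP (q \in s2)) => [_|/sa2 //] //.
rewrite /band (perm_big _ pe); apply: eq_bigr => p _.
by rewrite /band_term /weight_lt /weight_le (perm_big _ pe) [X in overlap _ X](perm_big _ pe).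
Qed.

End Band.

Section BandPoint.
Variables (R : realType) (d : Order.disp_t) (P : porderType d).
Variables (al : P -> R) (s : seq P).
Hypotheses (al0 : forall p, 0 <= al p) (us : uniq s) (sum1 : \sum_(p <- s) al p = 1).

Lemma weight_bounds p : p \in s ->
  [/\ 0 <= weight_lt al s p, weight_lt al s p <= weight_le al s p & weight_le al s p <= 1].
Proof.
move=> ps; split; first exact: sumr_ge0.
  by rewrite weight_le_lt // lerDl.
by rewrite -sum1; apply: (@ler_sum_subpred R d P al s _ xpredT al0).
Qed.

Lemma weight_le_lt_of_lt p1 p2 : (p1 < p2)%O -> weight_le al s p1 <= weight_lt al s p2.
Proof. by move=> lt12; apply: ler_sum_subpred => // q /= /le_lt_trans; apply. Qed.

Lemma overlap_weight01 p : p \in s -> overlap (weight_lt al s p) (weight_le al s p) 0 1 = al p.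
Proof.
move=> ps; have [? ? ?] := weight_bounds ps.
by rewrite overlap01 // weight_le_lt // addrAC subrr add0r.
Qed.

Lemma band01 g0 g1 g2 z : band al s g0 g1 g2 0 1 z = \sum_(p <- s) al p * (g1 p == z)%:R.
Proof.
apply: eq_big_seq => p ps.
by rewrite /band_term !overlapxx overlap_weight01 // !mul0r add0r addr0.
Qed.

Lemma band00 g0 g1 g2 z : band al s g0 g1 g2 0 0 z = \sum_(p <- s) al p * (g2 p == z)%:R.
Proof.
apply: eq_big_seq => p ps.
by rewrite /band_term !overlapxx overlap_weight01 // !mul0r !add0r.
Qed.

Variables (g0 g1 g2 : P -> P) (a b : R).
Hypotheses (a0 : 0 <= a) (ab : a <= b) (b1 : b <= 1).

Definition band_lo k := match k with 0%N => 0 | 1%N => a | _ => b end.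
Definition band_hi k := match k with 0%N => a | 1%N => b | _ => 1 end.
Definition band_map k := match k with 0%N => g0 | 1%N => g1 | _ => g2 end.
Definition band_active p k :=
  0 < overlap (weight_lt al s p) (weight_le al s p) (band_lo k) (band_hi k).

Lemma band_term_ge0 z p : 0 <= band_term al s g0 g1 g2 a b z p.
Proof.
rewrite /band_term; apply: addr_ge0; first apply: addr_ge0; apply: mulr_ge0;
  rewrite ?ler0n // overlap_ge0 //; lra.
Qed.

Lemma band_ge0 z : 0 <= band al s g0 g1 g2 a b z.
Proof. by apply: sumr_ge0 => p _; exact: band_term_ge0. Qed.

Definition band_support := undup (map g0 s ++ map g1 s ++ map g2 s).

Lemma band_out z : z \notin band_support -> band al s g0 g1 g2 a b z = 0.
Proof.
rewrite mem_undup !mem_cat !negb_or => /and3P[n0 n1 n2].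
apply: big1_seq => p /andP[_ ps]; rewrite /band_term.
have indicator0 (g : P -> P) : z \notin map g s -> (g p == z)%:R = 0 :> R.
  by move=> nz; case: eqP => // e; move: nz; rewrite -e map_f.
by rewrite (indicator0 _ n0) ?(indicator0 _ n1) ?(indicator0 _ n2) // !mulr0 !addr0.
Qed.

Lemma band_total (t : seq P) : uniq t -> {subset band_support <= t} ->
  \sum_(z <- t) band al s g0 g1 g2 a b z = 1.
Proof.
move=> ut sub; rewrite /band exchange_big /= -sum1; apply: eq_big_seq => p ps.
rewrite /band_term !big_split /= !sum_indicator //.
have -> : g0 p \in t by apply: sub; rewrite mem_undup !mem_cat map_f.
have -> : g1 p \in t by apply: sub; rewrite mem_undup !mem_cat map_f ?orbT.
have -> : g2 p \in t by apply: sub; rewrite mem_undup !mem_cat map_f ?orbT.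
have [? ? ?] := weight_bounds ps.
by rewrite overlap_split // weight_le_lt // addrC addKr.
Qed.

Lemma band_term_gt0 z p : 0 < band_term al s g0 g1 g2 a b z p ->
  exists2 k, (k < 3)%N & band_active p k /\ band_map k p = z.
Proof.
rewrite /band_term /band_active => pos.
set L := weight_lt al s p; set U := weight_le al s p.
have inactive0 (k : nat) : (k < 3)%N ->
    ~ (0 < overlap L U (band_lo k) (band_hi k) /\ band_map k p = z) ->
    overlap L U (band_lo k) (band_hi k) * (band_map k p == z)%:R = 0.
  move=> k3 nk; have : 0 <= overlap L U (band_lo k) (band_hi k).
    by apply: overlap_ge0; case: k k3 {nk} => [|[|[|]]] //=; lra.
  case: (band_map k p =P z) => [e|]; last by rewrite mulr0.
  rewrite le_eqVlt => /orP[/eqP <-|gt0]; first by rewrite mul0r.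
  by exfalso; apply: nk.
case: (pselect (0 < overlap L U 0 a /\ g0 p = z)) => [[]|n0]; first by exists 0%N.
case: (pselect (0 < overlap L U a b /\ g1 p = z)) => [[]|n1]; first by exists 1%N.
case: (pselect (0 < overlap L U b 1 /\ g2 p = z)) => [[]|n2]; first by exists 2%N.
move: pos; rewrite (inactive0 0%N) // (inactive0 1%N) // (inactive0 2%N) //; lra.
Qed.

Lemma band_gt0 z : 0 < band al s g0 g1 g2 a b z ->
  exists2 p, p \in s & exists2 k, (k < 3)%N & band_active p k /\ band_map k p = z.
Proof.
move=> pos; case: (pselect (exists2 p, p \in s & 0 < band_term al s g0 g1 g2 a b z p)).
  by case=> p ps /band_term_gt0 hp; exists p.
move=> none; move: pos; rewrite /band big_seq big1 ?ltxx // => p ps.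
apply/eqP; rewrite eq_le band_term_ge0 andbT leNgt; apply/negP => hp; apply: none.
by exists p.
Qed.

(* [ab_mid] rules out a middle band followed by a last one, where [g1] and
   [g2] would have to be comparable. *)
Hypotheses
  (g_homo : forall p q, p \in s -> q \in s -> (p <= q)%O ->
     [/\ (g0 p <= g0 q)%O, (g1 p <= g1 q)%O & (g2 p <= g2 q)%O])
  (g0_le1 : forall p, p \in s -> (g0 p <= g1 p)%O)
  (g0_le2 : forall p, p \in s -> (g0 p <= g2 p)%O)
  (ab_mid : a < b -> b = 1).

Lemma band_le p1 p2 k1 k2 : p1 \in s -> p2 \in s -> (p1 <= p2)%O ->
  (k1 < 3)%N -> (k2 < 3)%N -> band_active p1 k1 -> band_active p2 k2 ->
  (p1 = p2 -> (k1 <= k2)%N) -> (band_map k1 p1 <= band_map k2 p2)%O.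
Proof.
move=> p1s p2s le12 k13 k23 ac1 ac2 eqk.
have [L1 LU1 U1] := weight_bounds p1s; have [L2 LU2 U2] := weight_bounds p2s.
have [lo1 hi1 lh1] := overlap_gt0 LU1 ac1; have [lo2 hi2 lh2] := overlap_gt0 LU2 ac2.
(* Segments of smaller vertices lie further left. *)
have k12 : (k1 <= k2)%N.
  case: (p1 =P p2) => [/eqk //|ne].
  have lt12 : (p1 < p2)%O by rewrite lt_neqAle le12 andbT; apply/eqP.
  have UL := weight_le_lt_of_lt lt12; rewrite leqNgt; apply/negP => k21.
  have := lt_trans (lt_le_trans lo1 UL) hi2.
  move: k13 k23 k21; clear eqk ac1 ac2 lo1 hi1 lh1 lo2 hi2 lh2.
  case: k1 => [|[|[|]]] //; case: k2 => [|[|[|]]] //= _ _ _; rewrite ?ltxx //.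
  by move=> ba; have := lt_le_trans ba ab; rewrite ltxx.
have [h00 h11 h22] := g_homo p1s p2s le12.
have h01 := le_trans (g0_le1 p1s) h11; have h02 := le_trans (g0_le2 p1s) h22.
have h12 : a < b -> b < 1 -> (g1 p1 <= g2 p2)%O by move=> /ab_mid ->; rewrite ltxx.
move: k13 k23 k12 lo1 hi1 lh1 lo2 hi2 lh2; clear eqk ac1 ac2.
case: k1 => [|[|[|]]] //; case: k2 => [|[|[|]]] //= *.
exact: h12.
Qed.

Hypothesis s_chain : is_chain s.

Lemma band_chain z1 z2 : 0 < band al s g0 g1 g2 a b z1 ->
  0 < band al s g0 g1 g2 a b z2 -> (z1 <= z2)%O \/ (z2 <= z1)%O.
Proof.
have comparable p1 p2 k1 k2 : p1 \in s -> p2 \in s -> (p1 <= p2)%O ->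
    (k1 < 3)%N -> (k2 < 3)%N -> band_active p1 k1 -> band_active p2 k2 ->
    (band_map k1 p1 <= band_map k2 p2)%O \/ (band_map k2 p2 <= band_map k1 p1)%O.
  move=> p1s p2s le12 k13 k23 ac1 ac2; case: (leqP k1 k2) => kk.
    by left; apply: band_le.
  case: (p1 =P p2) => [e|ne].
    by subst p2; right; apply: band_le => // _; exact: ltnW.
  by left; apply: band_le => // /ne.
move=> /band_gt0 [p1 p1s [k1 k13 [ac1 <-]]] /band_gt0 [p2 p2s [k2 k23 [ac2 <-]]].
case: (s_chain p1s p2s) => le; first exact: comparable.
by case: (comparable p2 p1 k2 k1) => //; [right|left].
Qed.

End BandPoint.

Section BandLipschitz.
Variables (R : realType) (d : Order.disp_t) (P : porderType d).

Lemma sum_le_const (c : seq P) (F : P -> R) (E : R) : (forall p, p \in c -> F p <= E) ->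
  \sum_(p <- c) F p <= E *+ size c.
Proof.
elim: c => [|q c IH] FE; first by rewrite big_nil.
rewrite big_cons mulrS lerD ?FE ?mem_head // IH // => p pc.
by apply: FE; rewrite in_cons pc orbT.
Qed.

Definition l1_dist (c : seq P) (al be : P -> R) := \sum_(q <- c) `|al q - be q|.

Lemma weight_lt_lipschitz (c : seq P) al be p :
  `|weight_lt al c p - weight_lt be c p| <= l1_dist c al be.
Proof.
rewrite /weight_lt -sumrB; apply: le_trans (ler_norm_sum _ _ _) _.
rewrite /l1_dist big_mkcond [X in _ <= X]big_mkcond; apply: ler_sum => q _.
by case: (q < p)%O.
Qed.

Lemma weight_le_lipschitz (c : seq P) al be p :
  `|weight_le al c p - weight_le be c p| <= l1_dist c al be.
Proof.
rewrite /weight_le -sumrB; apply: le_trans (ler_norm_sum _ _ _) _.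
rewrite /l1_dist big_mkcond [X in _ <= X]big_mkcond; apply: ler_sum => q _.
by case: (q <= p)%O.
Qed.

Lemma band_lipschitz (c : seq P) al be g0 g1 g2 (a b a' b' : R) z :
  `|band al c g0 g1 g2 a b z - band be c g0 g1 g2 a' b' z| <=
    (l1_dist c al be *+ 12 + `|a - a'| *+ 3 + `|b - b'| *+ 3) *+ size c.
Proof.
rewrite /band -sumrB; apply: le_trans (ler_norm_sum _ _ _) _.
apply: sum_le_const => p _; rewrite /band_term.
set L := weight_lt al c p; set U := weight_le al c p.
set L' := weight_lt be c p; set U' := weight_le be c p.
have hL : `|L - L'| <= l1_dist c al be by exact: weight_lt_lipschitz.
have hU : `|U - U'| <= l1_dist c al be by exact: weight_le_lipschitz.
have hw lo hi lo' hi' : `|overlap L U lo hi - overlap L' U' lo' hi'| <=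
    l1_dist c al be *+ 4 + `|lo - lo'| + `|hi - hi'|.
  apply: le_trans (overlap_lipschitz _ _ _ _ _ _ _ _) _.
  rewrite !mulrS !mulr0n; lra.
have ind_lip (w w' : R) (bb : bool) : `|w * bb%:R - w' * bb%:R| <= `|w - w'|.
  by case: bb; rewrite ?mulr1 ?mulr0 ?subrr ?normr0.
have e1 := ind_lip (overlap L U 0 a) (overlap L' U' 0 a') (g0 p == z).
have e2 := ind_lip (overlap L U a b) (overlap L' U' a' b') (g1 p == z).
have e3 := ind_lip (overlap L U b 1) (overlap L' U' b' 1) (g2 p == z).
have f1 := hw 0 a 0 a'; have f2 := hw a b a' b'; have f3 := hw b 1 b' 1.
rewrite subrr normr0 addr0 in f1; rewrite subrr normr0 addr0 in f3.
set T := _ - _.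
have -> : T = (overlap L U 0 a * (g0 p == z)%:R - overlap L' U' 0 a' * (g0 p == z)%:R)
  + (overlap L U a b * (g1 p == z)%:R - overlap L' U' a' b' * (g1 p == z)%:R)
  + (overlap L U b 1 * (g2 p == z)%:R - overlap L' U' b' 1 * (g2 p == z)%:R).
  by rewrite /T; ring.
apply: le_trans (ler_normD _ _) _; apply: le_trans (lerD (ler_normD _ _) (lexx _)) _.
rewrite !mulrS !mulr0n in f1 f2 f3 *.
have := normr_ge0 (a - a'); have := normr_ge0 (b - b').
clear T hw hL hU; clearbody L U L' U'; lra.
Qed.

End BandLipschitz.

Section CommonEps.
Variable R : realType.

Lemma seq_common_eps (T : eqType) (l : seq T) (Q : T -> R -> Prop) :
  (forall x e e', Q x e -> 0 < e' -> e' <= e -> Q x e') ->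
  (forall x, x \in l -> exists2 e, 0 < e & Q x e) ->
  exists2 e, 0 < e & forall x, x \in l -> Q x e.
Proof.
move=> Qdown; elim: l => [|y l IH] Ql; first by exists 1.
have [e1 e1p Q1] := Ql y (mem_head _ _).
have [e2 e2p Q2] : exists2 e, 0 < e & forall x, x \in l -> Q x e.
  by apply: IH => x xl; apply: Ql; rewrite in_cons xl orbT.
have e12p : 0 < Num.min e1 e2 by rewrite lt_min e1p e2p.
exists (Num.min e1 e2) => // x; rewrite in_cons => /orP[/eqP ->|xl].
  by apply: Qdown Q1 _ _; rewrite // ge_min lexx.
by apply: Qdown (Q2 x xl) _ _; rewrite // ge_min lexx orbT.
Qed.

Lemma segment_common_eps (a b : R) (W : R -> R -> Prop) :
  (forall s e e', W s e -> 0 < e' -> e' <= e -> W s e') ->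
  (forall s, a <= s <= b -> exists2 e, 0 < e & forall s', `|s' - s| < e -> W s' e) ->
  exists2 e, 0 < e & forall s, a <= s <= b -> W s e.
Proof.
move=> Wdown Wloc.
have := @segment_compact R a b.
rewrite compact_near_coveringP => /(_ R (0%R^'+) (fun e s => W s e) _).
have near_W x : `[a, b]%classic x -> \forall x' \near x & i \near 0%R^'+, W x' i.
  rewrite /= in_itv /= => /Wloc [e ep We].
  exists (ball x e, [set i | 0 < i < e]) => /=.
    split; first exact: nbhsx_ballx.
    apply: filterS (filterI (nbhs_right_gt 0) (nbhs_right_lt ep)) => i [i0 ie] /=.
    by rewrite i0 ie.
  move=> [x' i] [/= bx /andP[i0 ie]]; apply: (Wdown _ e) => //; last exact: ltW.
  by apply: We; move: bx; rewrite /ball /= distrC.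
move=> /(_ near_W) near_ab.
have [i [ip Wi]] := filter_ex (filterI (nbhs_right_gt 0) near_ab).
by exists i => // s sab; apply: Wi; rewrite /= in_itv.
Qed.

End CommonEps.

Fixpoint sublists (T : Type) (s : seq T) : seq (seq T) :=
  if s is x :: s' then sublists s' ++ map (cons x) (sublists s') else [:: [::]].

Lemma filter_sublists (T : eqType) (s : seq T) (q : pred T) :
  seq.filter q s \in sublists s.
Proof.
elim: s => [|x s IH] //=; case: (q x); rewrite mem_cat ?IH //.
by rewrite map_f ?orbT.
Qed.

Section Realization.
Variables (R : realType) (d : Order.disp_t) (P : porderType d) (S : set P).

Definition chain_of (al : realization R S) : seq P := projT1 (cid (proj2 (svalP al))).

Lemma chain_ofP (al : realization R S) :
  [/\ uniq (chain_of al), (forall p, p \in chain_of al -> S p), is_chain (chain_of al),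
      supported_on (chain_of al) (sval al) & \sum_(p <- chain_of al) sval al p = 1].
Proof. exact: (projT2 (cid (proj2 (svalP al)))). Qed.

Lemma realization_ge0 (al : realization R S) p : 0 <= sval al p.
Proof. exact: (proj1 (svalP al)). Qed.

Lemma realization_supp (al : realization R S) p : sval al p != 0 -> S p.
Proof.
have [_ alS _ sa _] := chain_ofP al; move=> nz; apply: alS.
by case: (boolP (p \in chain_of al)) => // /sa al0; rewrite al0 eqxx in nz.
Qed.

Lemma realization_eq (al be : realization R S) : sval al =1 sval be -> al = be.
Proof.
move: al be => [fa pa] [fb pb] /= eq_ab.
have fab : fa = fb := funext eq_ab.
by subst fb; congr exist; exact: Prop_irrelevance.
Qed.

(* The topology only controls points supported on one chain; since there are
   finitely many chains inside a finite set [D], this extends to points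
   supported anywhere in [D]. *)
Lemma open_realization_uniform (U : set (realization R S)) (al : realization R S) D :
  open U -> U al -> uniq D -> supported_on D (sval al) ->
  exists2 e, 0 < e & forall be : realization R S, supported_on D (sval be) ->
    (forall p, p \in D -> `|sval be p - sval al p| < e) -> U be.
Proof.
move=> oU Ual uD sal.
(* Below the least nonzero weight of [al], nearby [be] keep every vertex of
   [al]; so [al] is supported on the chain of nonzero weights of [be]. *)
have [e1 e1p min_al] : exists2 e, 0 < e &
    forall p, p \in D -> sval al p != 0 -> e <= sval al p.
  apply: (@seq_common_eps R _ D (fun p e => sval al p != 0 -> e <= sval al p)).
    by move=> p e e' h _ e'e nz; exact: le_trans e'e (h nz).
  move=> p _; case: (boolP (sval al p == 0)) => [_|nz]; first by exists 1.
  by exists (sval al p) => //; rewrite lt_def nz realization_ge0.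
pose chain_supp c := [/\ uniq c, (forall p, p \in c -> S p), is_chain c &
  supported_on c (sval al)].
have [e2 e2p near_al] : exists2 e, 0 < e & forall c, c \in sublists D ->
    chain_supp c -> forall be : realization R S, supported_on c (sval be) ->
    (forall p, p \in c -> `|sval be p - sval al p| < e) -> U be.
  apply: (@seq_common_eps R _ (sublists D) (fun c e => chain_supp c ->
      forall be : realization R S, supported_on c (sval be) ->
      (forall p, p \in c -> `|sval be p - sval al p| < e) -> U be)).
    move=> c e e' h _ e'e cc be sbe close; apply: (h cc be sbe) => p pc.
    exact: lt_le_trans (close p pc) e'e.
  move=> c _; case: (pselect (chain_supp c)) => [[uc cS cc sc]|]; last by exists 1.
  by have [e ep Ue] := oU c uc cS cc al Ual sc; exists e => // _; exact: Ue.
exists (Num.min e1 e2); first by rewrite lt_min e1p e2p.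
move=> be sbe close.
pose c := seq.filter (fun p => sval be p != 0) D.
have [ub bS bchain sb _] := chain_ofP be.
have c_be p : p \in c -> p \in chain_of be.
  rewrite mem_filter => /andP[nz _]; apply/negP => nin.
  by move: nz; rewrite (sb p (introN idP nin)) eqxx.
apply: (near_al c (filter_sublists _ _)).
- split; first exact: filter_uniq.
  + by move=> p /c_be; exact: bS.
  + by move=> p q /c_be pb /c_be qb; exact: bchain.
  + move=> p; rewrite mem_filter negb_and negbK => /orP[/eqP be0|pD]; last exact: sal.
    case: (boolP (p \in D)) => pD; last exact: sal.
    case: (eqVneq (sval al p) 0) => // nz; exfalso.
    have := close p pD; rewrite be0 sub0r normrN ger0_norm ?realization_ge0 //.
    by rewrite lt_min => /andP[+ _]; rewrite ltNge min_al.
- by move=> p; rewrite mem_filter negb_and negbK => /orP[/eqP //|]; exact: sbe.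
- move=> p; rewrite mem_filter => /andP[_ pD].
  by have := close p pD; rewrite lt_min => /andP[].
Qed.

End Realization.

Section Zigzag.
Variables (R : realType) (d : Order.disp_t) (P : porderType d).
Variables (S S' : set P) (g0 g1 g2 : P -> P).
Hypotheses (g0S : {homo g0 : p / S p >-> S' p}) (g1S : {homo g1 : p / S p >-> S' p})
  (g2S : {homo g2 : p / S p >-> S' p}).
Hypotheses (g0_homo : forall p q, S p -> S q -> (p <= q)%O -> (g0 p <= g0 q)%O)
  (g1_homo : forall p q, S p -> S q -> (p <= q)%O -> (g1 p <= g1 q)%O)
  (g2_homo : forall p q, S p -> S q -> (p <= q)%O -> (g2 p <= g2 q)%O).
Hypotheses (g0_le1 : forall p, S p -> (g0 p <= g1 p)%O)
  (g0_le2 : forall p, S p -> (g0 p <= g2 p)%O).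

Definition zigzag_val (al : realization R S) (t : R) : P -> R :=
  band (sval al) (chain_of al) g0 g1 g2 (path_lo t) (path_hi t).

Lemma zigzag_in al t : in_realization S' (zigzag_val al t).
Proof.
have [us Ss cs sa s1] := chain_ofP al.
have al0 := realization_ge0 al.
have [lo0 lohi hi1] := path_bounds t.
have band0 := band_ge0 (sval al) (chain_of al) g0 g1 g2 lo0 lohi hi1.
split=> [z|]; first exact: band0.
exists (seq.filter (fun z => zigzag_val al t z != 0) (band_support (chain_of al) g0 g1 g2)).
split.
- by rewrite filter_uniq // undup_uniq.
- move=> z; rewrite mem_filter mem_undup !mem_cat => /andP[_].
  by case/or3P=> /mapP[p /Ss Sp ->]; [apply: g0S | apply: g1S | apply: g2S].
- move=> z1 z2; rewrite !mem_filter => /andP[nz1 _] /andP[nz2 _].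
  have g_homo p q : p \in chain_of al -> q \in chain_of al -> (p <= q)%O -> _ :=
    fun ps qs pq => And3 (g0_homo (Ss p ps) (Ss q qs) pq) (g1_homo (Ss p ps) (Ss q qs) pq)
      (g2_homo (Ss p ps) (Ss q qs) pq).
  apply: (band_chain al0 us s1 lo0 lohi hi1 g_homo _ _ (@path_mid R t) cs).
  + by move=> p /Ss; exact: g0_le1.
  + by move=> p /Ss; exact: g0_le2.
  + by rewrite lt_def nz1 band0.
  + by rewrite lt_def nz2 band0.
- move=> z; rewrite mem_filter negb_and negbK => /orP[/eqP //|nD].
  exact: band_out.
- rewrite big_filter big_mkcond /= -(band_total (g0:=g0) (g1:=g1) (g2:=g2) al0 us s1
    (path_lo t) (path_hi t) (undup_uniq _) (fun z zs => zs)).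
  by apply: eq_bigr => z _; case: eqP.
Qed.

Definition zigzag (w : realization R S * R) : realization R S' :=
  exist _ (zigzag_val w.1 w.2) (zigzag_in w.1 w.2).

Lemma zigzagE al t c z : uniq c -> supported_on c (sval al) ->
  sval (zigzag (al, t)) z = band (sval al) c g0 g1 g2 (path_lo t) (path_hi t) z.
Proof. by move=> uc sc; have [us _ _ sa _] := chain_ofP al; exact: band_chain_indep. Qed.

Lemma zigzag0 al z :
  sval (zigzag (al, 0)) z = \sum_(p <- chain_of al) sval al p * (g2 p == z)%:R.
Proof.
have [us _ _ _ s1] := chain_ofP al; rewrite /= /zigzag_val; have [-> ->] := @path0 R.
exact: (band00 (realization_ge0 al) us s1).
Qed.

Lemma zigzag1 al z :
  sval (zigzag (al, 1)) z = \sum_(p <- chain_of al) sval al p * (g1 p == z)%:R.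
Proof.
have [us _ _ _ s1] := chain_ofP al; rewrite /= /zigzag_val; have [-> ->] := @path1 R.
exact: (band01 (realization_ge0 al) us s1).
Qed.

Lemma zigzag_near (al : realization R S) c t0 (U : set (realization R S')) :
  uniq c -> supported_on c (sval al) -> open U -> U (zigzag (al, t0)) ->
  exists2 eta, 0 < eta & forall (be : realization R S) t, supported_on c (sval be) ->
    (forall p, p \in c -> `|sval be p - sval al p| < eta) -> `|t - t0| < eta ->
    U (zigzag (be, t)).
Proof.
move=> uc sc oU Ual.
have uD : uniq (band_support c g0 g1 g2) by exact: undup_uniq.
have suppD be t : supported_on c (sval be) ->
    supported_on (band_support c g0 g1 g2) (sval (zigzag (be, t))).
  by move=> sb z zn; rewrite (zigzagE _ _ uc sb); exact: band_out.
have [e ep Ue] := open_realization_uniform oU Ual uD (suppD al t0 sc).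
set N : R := (size c)%:R.
have N0 : 0 <= N by rewrite ler0n.
(* [band_lipschitz] bounds the change by [eta * (12 N + 12) * N < eta * (K + 1) = e]. *)
set K : R := (N + 1) ^+ 2 * 12.
have K0 : 0 <= K by rewrite /K mulr_ge0 // ?exprn_ge0 // addr_ge0.
have K1 : 0 < K + 1 by rewrite ltr_wpDl.
exists (e / (K + 1)); first by rewrite divr_gt0.
set eta := e / (K + 1).
have eK : e = eta * (K + 1) by rewrite /eta divfK // gt_eqF.
have etap : 0 < eta by rewrite /eta divr_gt0.
move=> be t sb close tt0; apply: Ue; first exact: suppD.
move=> z _; rewrite (zigzagE _ _ uc sb) (zigzagE _ _ uc sc).
apply: le_lt_trans (band_lipschitz _ _ _ _ _ _ _ _ _ _ _) _.
have hd : l1_dist c (sval be) (sval al) <= eta * N.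
  by rewrite /l1_dist /N mulr_natr; apply: sum_le_const => p pc; exact: ltW (close p pc).
have lip2 (F : R -> R) : (forall t t', `|F t - F t'| <= `|t - t'| *+ 2) ->
    `|F t - F t0| <= eta * 2.
  move=> Flip; apply: le_trans (Flip _ _) _; rewrite mulr_natr !mulr2n.
  by apply: lerD; exact: ltW.
have hA := lip2 _ (@path_lo_lipschitz R); have hB := lip2 _ (@path_hi_lipschitz R).
set Y := _ + _ + _.
rewrite -mulr_natr -/N.
have hY : Y <= eta * (N * 12 + 12).
  apply: (@le_trans _ _ ((eta * N) *+ 12 + (eta * 2) *+ 3 + (eta * 2) *+ 3)).
    by rewrite /Y; apply: lerD; [apply: lerD|]; rewrite lerMn2r ?hd ?hA ?hB ?orbT.
  by rewrite le_eqVlt; apply/orP; left; apply/eqP; ring.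
rewrite eK; apply: le_lt_trans (ler_wpM2r N0 hY) _.
rewrite -mulrA ltr_pM2l // /K.
have -> : (N + 1) ^+ 2 * 12 + 1 = (N * 12 + 12) * N + (N * 12 + 13) by ring.
by rewrite ltrDl; apply: ltr_wpDl; rewrite ?mulr_ge0.
Qed.

(* A neighbourhood of [(al, t)] is built as (points near [al] uniformly for
   parameters near [t]) x (parameters near [t]); the uniformity in the
   parameter comes from compactness of a segment. *)
Lemma zigzag_continuous : continuous zigzag.
Proof.
move=> [al t] N /=; rewrite nbhsE => -[U [oU Ual] UN].
have [uc _ _ sc _] := chain_ofP al.
have [eta etap near_al] := zigzag_near uc sc oU Ual.
pose del := eta / 2.
have delp : 0 < del by rewrite divr_gt0.
have deleta : del < eta by rewrite /del ltr_pdivrMr // ltr_pMr // ltr1n.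
pose V := [set be : realization R S | forall s, `|s - t| <= del -> U (zigzag (be, s))].
have Val : V al.
  move=> s st; apply: near_al => //; last exact: le_lt_trans st deleta.
  by move=> p _; rewrite subrr normr0.
have oV : open V.
  move=> c' uc' Sc' cc' b1 Vb1 sb1.
  pose W s e := forall be : realization R S, supported_on c' (sval be) ->
    (forall p, p \in c' -> `|sval be p - sval b1 p| < e) -> U (zigzag (be, s)).
  have [e ep We] : exists2 e, 0 < e & forall s, t - del <= s <= t + del -> W s e.
    apply: segment_common_eps.
    - move=> s e e' We _ e'e be sb close; apply: We => // p pc.
      exact: lt_le_trans (close p pc) e'e.
    - move=> s st; have st' : `|s - t| <= del by rewrite ler_distl.
      have [et etp Uet] := zigzag_near uc' sb1 oU (Vb1 s st').
      by exists et => // s' s's be sb close; exact: Uet.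
  by exists e => // be sb close s st; apply: We => //; rewrite -ler_distl.
exists (V, ball t del) => /=.
  by split; [exact: open_nbhs_nbhs | exact: nbhsx_ballx].
move=> [be s] [/= Vbe bs]; apply: UN; apply: Vbe.
by move: bs; rewrite /ball /= distrC => /ltW.
Qed.

End Zigzag.

Section Homotopic.
Variables (R : realType) (X Y : topologicalType).

Lemma continuous_slice (Z : topologicalType) (F : X * R -> Z) (t : R) :
  continuous F -> continuous (fun a => F (a, t)).
Proof.
move=> cF a; apply: (@continuous_comp _ _ _ (fun a => (a, t)) F a _ (cF _)).
move=> N [[A B] /= [nA nB] sAB]; apply: filterS nA => a' Aa'.
by apply: (sAB (a', t)); split => //; exact: nbhs_singleton nB.
Qed.

Lemma homotopic_refl (g : X -> Y) : continuous g -> homotopic R g g.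
Proof.
move=> cg; exists (fun w => g w.1); split => //.
by apply: continuous_subspaceT => w; apply: continuous_comp; [exact: cvg_fst | exact: cg].
Qed.

Lemma homotopic_eq (g g' h h' : X -> Y) :
  homotopic R g h -> g =1 g' -> h =1 h' -> homotopic R g' h'.
Proof. by move=> + /funext <- /funext <-. Qed.

End Homotopic.

Section Push.
Variables (R : realType) (d : Order.disp_t) (P : porderType d) (S S' : set P) (g : P -> P).
Hypotheses (gS : {homo g : p / S p >-> S' p})
  (g_homo : forall p q, S p -> S q -> (p <= q)%O -> (g p <= g q)%O).

Definition push (al : realization R S) : realization R S' :=
  zigzag gS gS gS g_homo g_homo g_homo (fun p _ => lexx (g p)) (fun p _ => lexx (g p)) (al, 0).

Lemma push_continuous : continuous push.
Proof. by rewrite /push; apply: continuous_slice; exact: zigzag_continuous. Qed.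

Lemma pushE al z : sval (push al) z = \sum_(p <- chain_of al) sval al p * (g p == z)%:R.
Proof. exact: zigzag0. Qed.

Lemma push_fixE al : (forall p, sval al p != 0 -> g p = p) -> sval (push al) =1 sval al.
Proof.
move=> gfix z; have [us _ _ sa _] := chain_ofP al; rewrite pushE.
rewrite -(sum_weight_indicator z us sa); apply: eq_bigr => p _.
by case: (eqVneq (sval al p) 0) => [->|/gfix ->]; rewrite ?mul0r.
Qed.

End Push.

Section PushHomotopic.
Variables (R : realType) (d : Order.disp_t) (P : porderType d).
Variables (S S' : set P) (g0 g1 g2 : P -> P).
Hypotheses (g0S : {homo g0 : p / S p >-> S' p}) (g1S : {homo g1 : p / S p >-> S' p})
  (g2S : {homo g2 : p / S p >-> S' p}).
Hypotheses (g0_homo : forall p q, S p -> S q -> (p <= q)%O -> (g0 p <= g0 q)%O)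
  (g1_homo : forall p q, S p -> S q -> (p <= q)%O -> (g1 p <= g1 q)%O)
  (g2_homo : forall p q, S p -> S q -> (p <= q)%O -> (g2 p <= g2 q)%O).
Hypotheses (g0_le1 : forall p, S p -> (g0 p <= g1 p)%O)
  (g0_le2 : forall p, S p -> (g0 p <= g2 p)%O).

Lemma push_homotopic : homotopic R (push (R:=R) g2S g2_homo) (push (R:=R) g1S g1_homo).
Proof.
exists (zigzag g0S g1S g2S g0_homo g1_homo g2_homo g0_le1 g0_le2); split.
- exact/continuous_subspaceT/zigzag_continuous.
- by move=> al; apply: realization_eq => z; rewrite zigzag0 pushE.
- by move=> al; apply: realization_eq => z; rewrite zigzag1 pushE.
Qed.

End PushHomotopic.

Section Vertex.
Variables (R : realType) (d : Order.disp_t) (P : porderType d) (S : set P) (c : P).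
Hypothesis Sc : S c.

Lemma vertex_in : in_realization S (fun z : P => (z == c)%:R : R).
Proof.
split=> [p|]; first by rewrite ler0n.
exists [:: c]; split => //.
- by move=> p; rewrite inE => /eqP ->.
- by move=> a b; rewrite !inE => /eqP -> /eqP ->; left.
- by move=> p; rewrite inE => /negbTE ->.
- by rewrite big_seq1 eqxx.
Qed.

Definition vertex : realization R S := exist _ _ vertex_in.

Lemma push_constE (S0 : set P) (al : realization R S0) :
  sval (push (fun p _ => Sc) (fun p q _ _ _ => lexx c) al) =1 sval vertex.
Proof.
move=> z; have [_ _ _ _ s1] := chain_ofP al.
by rewrite pushE -big_distrl /= s1 mul1r eq_sym.
Qed.

End Vertex.

Section ClosureInterval.
Variables (R : realType) (d : Order.disp_t) (P : porderType d) (f : P -> P) (x y : P).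
Hypotheses (f_closure : downward_closure f) (f_x : f @^-1` [set x] = [set x]).

Let f_homo : {homo f : a b / (a <= b)%O}. Proof. by case: f_closure. Qed.
Let f_le z : (f z <= z)%O. Proof. by case: f_closure. Qed.
Let f_idem z : f (f z) = f z. Proof. by case: f_closure. Qed.

Let I := open_interval setT x y.
Let If := open_interval (Fix f) x y.

Lemma closure_gt z : (x < z)%O -> (x < f z)%O.
Proof.
move=> xz; rewrite lt_neqAle; apply/andP; split.
  apply/eqP => xfz; have : (f @^-1` [set x]) z by rewrite /preimage /= -xfz.
  by rewrite f_x => zx; move: xz; rewrite zx ltxx.
have fx : f x = x by have : (f @^-1` [set x]) x by rewrite f_x.
by rewrite -{1}fx; apply: f_homo; exact: ltW.
Qed.

Lemma closure_interval : {homo f : z / I z >-> If z}.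
Proof.
move=> z [_ [xz zy]]; split; first exact: f_idem.
by split; [exact: closure_gt | exact: le_lt_trans (f_le z) zy].
Qed.

Lemma fix_interval_sub : {homo id : z / If z >-> I z}.
Proof. by move=> z [_ h]. Qed.

Lemma interval_homotopy_fix : homotopy_equivalent R (realization R I) (realization R If).
Proof.
have f_homoI p q (_ : I p) (_ : I q) := @f_homo p q.
have id_homoI p q (_ : I p) (_ : I q) := @id (p <= q)%O.
have id_homoIf p q (_ : If p) (_ : If q) := @id (p <= q)%O.
have fI : {homo f : z / I z >-> I z} by move=> z /closure_interval /fix_interval_sub.
pose retract := push (R:=R) closure_interval f_homoI.
pose incl := push (R:=R) fix_interval_sub id_homoIf.
exists retract, incl; split; try exact: push_continuous.
- apply: (homotopic_eq (@push_homotopic R _ _ _ _ f _ _ fI (fun p Ip => Ip) fI f_homoI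
    id_homoI f_homoI (fun p _ => f_le p) (fun p _ => lexx (f p)))).
    move=> al /=; apply: realization_eq => z; rewrite /incl /retract [in RHS]push_fixE // !pushE.
  by move=> al; apply: realization_eq; exact: push_fixE.
- have retract_incl : idfun =1 retract \o incl.
    move=> be /=; apply: realization_eq => z; rewrite /incl /retract push_fixE ?push_fixE //.
    by move=> p; rewrite push_fixE // => /realization_supp [].
  have idI : continuous (@idfun (realization R If)) by move=> be; exact: cvg_id.
  exact: homotopic_eq (homotopic_refl R idI) retract_incl (frefl _).
Qed.

Lemma interval_contractible : (x < y)%O -> ~ Fix f y ->
  homotopy_equivalent R (realization R I) pt.
Proof.
move=> xy ynfix.
have Ic : I (f y).
  split=> //; split; first exact: closure_gt.
  by rewrite lt_neqAle f_le andbT; apply: contra_notN ynfix => /eqP.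
have f_homoI p q (_ : I p) (_ : I q) := @f_homo p q.
have id_homoI p q (_ : I p) (_ : I q) := @id (p <= q)%O.
have fI : {homo f : z / I z >-> I z} by move=> z /closure_interval /fix_interval_sub.
have f_le_c p : I p -> (f p <= f y)%O by move=> [_ [_ /ltW /f_homo]].
exists (fun _ => tt : pt), (fun _ => vertex R Ic); split; try exact: cst_continuous.
- apply: (homotopic_eq (@push_homotopic R _ _ _ _ f _ _ fI (fun p Ip => Ip) (fun p _ => Ic)
    f_homoI id_homoI (fun p q _ _ _ => lexx (f y)) (fun p _ => f_le p) f_le_c)).
    by move=> al; apply: realization_eq; exact: push_constE.
  by move=> al; apply: realization_eq; exact: push_fixE.
- have idpt : continuous (@idfun pt) by move=> ?; exact: cvg_id.
  by apply: (homotopic_eq (homotopic_refl R idpt)) => [[]|].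
Qed.

End ClosureInterval.

Theorem lemma2p7 (R : realType) (d : Order.disp_t) (P : porderType d)
    (f : P -> P) (x y : P) :
  downward_closure f -> (x < y)%O ->
  f @^-1` [set x] = [set x] ->
  (Fix f y ->
     homotopy_equivalent R (realization R (open_interval setT x y))
                           (realization R (open_interval (Fix f) x y))) /\
  (~ Fix f y ->
     homotopy_equivalent R (realization R (open_interval setT x y)) pt).
Proof.
move=> f_closure xy f_x; split=> [_|]; first exact: interval_homotopy_fix.
exact: interval_contractible.
Qed.
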